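(* Let $p$ be a prime with $p\equiv3\pmod 4$. Let $E$ be the group of translations of $\mathbb F_p^2$, let $Q\le{\rm SL}(2,p)$ be a subgroup isomorphic to the quaternion group $Q_8$, and let $g\in Q$ have order $4$. Then $E\rtimes Q$ and $E\rtimes\langle g\rangle$, acting on $\mathbb F_p^2$, are nonisomorphic primitive groups of degree $p^2$ with the same spectrum.
   Context: The spectrum of a permutation group is the set of cycle types of its elements. *)

From HB Require Import structures.
From mathcomp Require Import all_boot all_order all_algebra all_fingroup all_solvable all_field.
Set Implicit Arguments. Unset Strict Implicit. Unset Printing Implicit Defensive.
Import GRing.Theory.
Local Open Scope ring_scope.
Local Open Scope group_scope.

(* Cycle type of a permutation: the multiset (as a list, compared up to
   permutation) of the lengths of its cycles, fixed points included. *)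
Definition cycle_type (T : finType) (s : {perm T}) : seq nat :=
  [seq #|X| | X : {set T} <- enum (porbits s)].

Definition same_spectrum (T : finType) (G H : {set {perm T}}) : Prop :=
  (forall s, s \in G -> exists2 t, t \in H & perm_eq (cycle_type s) (cycle_type t)) /\
  (forall t, t \in H -> exists2 s, s \in G & perm_eq (cycle_type t) (cycle_type s)).

Definition affine_group (p : nat) (H : {set {'GL_2['F_p]}}) : {group {perm 'rV['F_p]_2}} :=
  <<[set s : {perm 'rV['F_p]_2} |
      [exists v : 'rV['F_p]_2, exists g in H,
         [forall x, s x == (x *m GLval g + v)%R]]]>>%G.

(* Since p = 3 mod 4, -1 is not a square in F_p, so a matrix A with A^2 = -1
   has no eigenvector and any nonzero w spans F_p^2 together with wA.  The block
   through 0 of a block system of E ⋊ H is an additive subgroup stable under the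
   linear part H; if H contains such an A, it is 0 or everything, whence
   primitivity.  In SL(2,p) the only involution is -1, so every element of
   Q ≅ Q_8 squares to 1 or -1, and those squaring to 1 are ±1 ∈ <g>.  An affine
   map s : x ↦ xA + v with A^2 = -1 has s^4 = 1, and s^2 : x ↦ c - x fixes only
   c/2, so s has one fixed point and (p^2 - 1)/4 cycles of length 4, like x ↦ xg.
   The groups have orders 8p^2 and 4p^2, so they are not isomorphic. *)

From HB Require Import structures.
From mathcomp Require Import all_boot all_order all_algebra all_fingroup all_solvable all_field.
From mathcomp Require Import ring zify.
Set Implicit Arguments. Unset Strict Implicit. Unset Printing Implicit Defensive.
Import GRing.Theory.

Section TwoByTwo.
Local Open Scope ring_scope.
Variable R : comNzRingType.

Lemma det_mx22 (M : 'M[R]_2) : \det M = M 0 0 * M 1 1 - M 0 1 * M 1 0.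
Proof.
rewrite (expand_det_row _ 0) !big_ord_recl big_ord0 /cofactor !det_mx11 !mxE /=.
rewrite addr0 expr0 expr1 !mul1r mulN1r mulrN.
by congr (M _ _ * M _ _ - M _ _ * M _ _); apply/val_inj.
Qed.

Lemma Cayley_Hamilton_mx22 (M : 'M[R]_2) : M ^+ 2 = \tr M *: M - (\det M)%:M.
Proof.
rewrite expr2 -mulmxE det_mx22; apply/matrixP => i j.
rewrite !mxE /mxtrace !big_ord_recl !big_ord0 /= ?mxE.
have -> : lift ord0 ord0 = 1 :> 'I_2 by apply/val_inj.
have i01 : (i == 0) || (i == 1) by case: i => [[|[|]]].
have j01 : (j == 0) || (j == 1) by case: j => [[|[|]]].
by case/orP: i01 => /eqP->; case/orP: j01 => /eqP->; rewrite /=; ring.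
Qed.

Lemma mul_rV2_col_mx n (u : 'rV[R]_2) (a b : 'rV[R]_n) :
  u *m col_mx a b = u 0 0 *: a + u 0 1 *: b.
Proof.
rewrite -{1}(hsubmxK (u : 'rV_(1 + 1))) (mul_row_col (lsubmx (u : 'rV_(1 + 1)))).
rewrite [lsubmx _]mx11_scalar [rsubmx _]mx11_scalar.
by rewrite !mul_scalar_mx !mxE; congr (u _ _ *: _ + u _ _ *: _); apply/val_inj.
Qed.

Lemma rV2_eq (u v : 'rV[R]_2) : u 0 0 = v 0 0 -> u 0 1 = v 0 1 -> u = v.
Proof.
move=> e0 e1; apply/rowP => -[[|[|//]] j2]; [move: e0 | move: e1];
  by congr (_ = _); congr (_ _ _); apply/val_inj.
Qed.

End TwoByTwo.

Section CharNeq2.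
Local Open Scope ring_scope.
Variable F : fieldType.
Hypothesis two_neq0 : 2%:R != 0 :> F.

Lemma sl2_sqr_eq1 (M : 'M[F]_2) : \det M = 1 -> M ^+ 2 = 1 -> M = 1 \/ M = -1.
Proof.
move=> detM M2.
(* Cayley-Hamilton turns M^2 = 1 = det M into tr M *: M = 2, so M is scalar. *)
have trM : \tr M *: M = 2%:R%:M.
  rewrite -[_ *: M](subrK (\det M)%:M) -Cayley_Hamilton_mx22 M2 detM.
  by rewrite -natr1 raddfD.
have tr_neq0 : \tr M != 0.
  apply: contraNneq two_neq0 => tr0.
  by move/matrixP/(_ 0 0): trM; rewrite tr0 scale0r !mxE eqxx mulr1n => <-.
move: M2; have {trM} -> : M = ((\tr M)^-1 * 2%:R)%:M.
  by rewrite -scalemx1 -scalerA scalemx1 -trM scalerA mulVf // scale1r.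
move/matrixP/(_ 0 0); rewrite expr2 -mulmxE mul_scalar_mx scale_scalar_mx !mxE.
rewrite !mulr1n -expr2 => /eqP.
by rewrite sqrf_eq1 => /orP[] /eqP->; [left | right; rewrite raddfN].
Qed.

End CharNeq2.

Section NoSqrtN1.
Local Open Scope ring_scope.
Variable F : fieldType.
Hypothesis sqr_neqN1 : forall a : F, a ^+ 2 != -1.

Lemma natr2_neq0 : 2%:R != 0 :> F.
Proof. by apply: contra (sqr_neqN1 1); rewrite expr1n -addr_eq0. Qed.

Lemma addv_eq0 (w : 'rV[F]_2) : w + w = 0 -> w = 0.
Proof. by move/eqP; rewrite -mulr2n -scaler_nat scaler_eq0 (negbTE natr2_neq0) => /eqP. Qed.

Variable M : 'M[F]_2.
Hypothesis M2 : M ^+ 2 = -1.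

Lemma mulmx_sqrN1 (w : 'rV[F]_2) : w *m M *m M = - w.
Proof. by rewrite -mulmxA (_ : M *m M = -1) ?mulmxN ?mulmx1 //; exact: M2. Qed.

Lemma no_eigenvector (w : 'rV[F]_2) (a : F) : w != 0 -> w *m M != a *: w.
Proof.
move=> w0; apply/eqP => wM.
have : (a ^+ 2 + 1) *: w = 0.
  by rewrite scalerDl scale1r expr2 -scalerA -wM scalemxAl -wM mulmx_sqrN1 addNr.
by apply/eqP; rewrite scaler_eq0 (negbTE w0) orbF addr_eq0 sqr_neqN1.
Qed.

Lemma rV2_span (w x : 'rV[F]_2) : w != 0 -> exists a b, x = a *: w + b *: (w *m M).
Proof.
move=> w0; pose A := col_mx w (w *m M).
have freeA : row_free A.
  apply: inj_row_free => u; rewrite mul_rV2_col_mx => /eqP; rewrite addr_eq0 => /eqP uA.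
  have u1 : u 0 1 = 0.
    apply: contraTeq (no_eigenvector (- (u 0 0 / u 0 1)) w0) => u1; apply/negPn/eqP.
    by apply: (scalerI u1); rewrite scalerA mulrN mulrC mulfVK // scaleNr uA opprK.
  have u0 : u 0 0 = 0.
    by apply/eqP; move/eqP: uA; rewrite u1 scale0r oppr0 scaler_eq0 (negbTE w0) orbF.
  by apply: rV2_eq; rewrite mxE.
rewrite row_free_unit in freeA.
have := mulmxKV freeA x; rewrite mul_rV2_col_mx => <-.
by do 2 eexists.
Qed.

End NoSqrtN1.

Lemma perm_eq_1_nseq4 (l : seq nat) :
  {subset l <= [:: 1; 4]} -> count_mem 1 l <= 1 -> sumn l = 1 %[mod 4] ->
  perm_eq l (1 :: nseq (sumn l %/ 4) 4).
Proof.
move=> l14 l1 suml.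
have count14 (a : pred nat) : count a l = a 1 * count_mem 1 l + a 4 * count_mem 4 l.
  elim: l l14 {l1 suml} => [|n l IHl] l14 /=; first by rewrite !muln0.
  rewrite IHl => [|m ml]; last by apply: l14; rewrite inE ml orbT.
  have := l14 n (mem_head _ _); rewrite !inE => /orP[] /eqP->;
    by case: (a 1); case: (a 4) => /=; lia.
have sum14 : sumn l = count_mem 1 l + 4 * count_mem 4 l.
  elim: l l14 {l1 suml count14} => [|n l IHl] l14 //=.
  rewrite IHl => [|m ml]; last by apply: l14; rewrite inE ml orbT.
  by have := l14 n (mem_head _ _); rewrite !inE => /orP[] /eqP-> /=; lia.
rewrite sum14 in suml *; have l1e : count_mem 1 l = 1 by move: suml; rewrite -modnDm; lia.
apply/seq.permP => a; rewrite count14 /= count_nseq l1e.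
by case: (a 1); case: (a 4) => /=; lia.
Qed.

Lemma card_porbit_dvdn (T : finType) (s : {perm T}) x : #|porbit s x| %| #[s]%g.
Proof. by rewrite porbit.unlock orderE (dvdn_orbit 'P). Qed.

Lemma porbits_partition (T : finType) (s : {perm T}) : partition (porbits s) [set: T].
Proof.
have -> : porbits s = orbit 'P <[s]>%g @: [set: T].
  by apply/setP => X; apply/imsetP/imsetP => -[x _ ->]; exists x; rewrite ?porbit.unlock.
by apply: orbit_partition; apply/actsP => a _ x; rewrite !inE.
Qed.

Lemma sumn_cycle_type (T : finType) (s : {perm T}) : sumn (cycle_type s) = #|T|.
Proof.
by rewrite sumnE big_map big_enum /= -cardsT (card_partition (porbits_partition s)).
Qed.

Lemma count_cycle_type (T : finType) (s : {perm T}) (a : pred nat) :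
  count a (cycle_type s) = #|[set X in porbits s | a #|X|]|.
Proof.
rewrite count_map -size_filter cardE.
have -> : [set X in porbits s | a #|X|] = porbits s :&: [set X : {set T} | a #|X|].
  by apply/setP => X; rewrite !inE.
by rewrite (perm_size (enum_setI _ _)); congr size; apply: eq_filter => X; rewrite inE.
Qed.

Section CycleType14.
Variables (T : finType) (s : {perm T}).
Hypothesis s4 : (s ^+ 4 = 1)%g.
Hypothesis s2_fix : forall x y, (s ^+ 2)%g x = x -> (s ^+ 2)%g y = y -> x = y.
Hypothesis cardT : #|T| = 1 %[mod 4].

Lemma card_porbit_1or4 x : #|porbit s x| \in [:: 1; 4].
Proof.
have : #|porbit s x| %| 4 by apply: dvdn_trans (card_porbit_dvdn s x) _; rewrite order_dvdn s4.
have := uniq_traject_porbit s x; have := iter_porbit s x.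
case: #|porbit s x| => [|[|[|[|[|n]]]]] //= ssx /andP[+ _] _; rewrite inE => /eqP[].
by apply: s2_fix; rewrite permX /= ssx.
Qed.

Lemma card_porbits1_le1 : #|[set X in porbits s | #|X| == 1]| <= 1.
Proof.
have fix1 z : #|porbit s z| = 1 -> (s ^+ 2)%g z = z.
  by move=> z1; have := iter_porbit s z; rewrite z1 permX /= => sz; rewrite !sz.
apply/card_le1_eqP => _ _ /setIdP[/imsetP[x _ ->] /eqP x1] /setIdP[/imsetP[y _ ->] /eqP y1].
by rewrite (s2_fix (fix1 x x1) (fix1 y y1)).
Qed.

Lemma cycle_type_1_4 : perm_eq (cycle_type s) (1 :: nseq (#|T| %/ 4) 4).
Proof.
rewrite -(sumn_cycle_type s); apply: perm_eq_1_nseq4; last by rewrite sumn_cycle_type.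
  by move=> n /mapP[X]; rewrite mem_enum => /imsetP[x _ ->] ->; apply: card_porbit_1or4.
by rewrite count_cycle_type card_porbits1_le1.
Qed.

End CycleType14.

Lemma pblock_act (aT : finGroupType) (T : finType) (to : {action aT &-> T})
    (A : {set aT}) (P : {set {set T}}) (D : {set T}) a x :
  partition P D -> [acts A, on P | to^*] -> a \in A -> x \in D ->
  pblock P (to x a) = setact to (pblock P x) a.
Proof.
move=> partP actsAP Aa Dx; have [/eqP covP trivP _] := and3P partP.
apply: def_pblock => //; first by rewrite (actsP actsAP) // pblock_mem ?covP.
by apply: imset_f; rewrite mem_pblock covP.
Qed.

Section AffineGroup.
Local Open Scope ring_scope.
Variable p : nat.
Local Notation V := 'rV['F_p]_2.
Local Notation GL := {'GL_2['F_p]}.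

Lemma GLvalX (A : GL) n : GLval (A ^+ n)%g = GLval A ^+ n.
Proof. by elim: n => [|n IHn]; rewrite ?expg0 ?expr0 // expgS exprS GL_ME IHn. Qed.

Lemma affine_inj (A : GL) (v : V) : injective (fun x : V => x *m GLval A + v).
Proof.
by move=> x y /addIr; apply: row_free_inj; rewrite row_free_unit; exact: (GL_unitmx A).
Qed.

Definition affine_perm (A : GL) (v : V) : {perm V} := perm (@affine_inj A v).

Lemma affine_permE A v x : affine_perm A v x = x *m GLval A + v.
Proof. by rewrite permE. Qed.

Lemma affine_perm1 : affine_perm 1 0 = 1%g.
Proof. by apply/permP => x; rewrite affine_permE perm1 GL_1E mulmx1 addr0. Qed.

Lemma affine_permM A B v w :
  (affine_perm A v * affine_perm B w)%g = affine_perm (A * B) (v *m GLval B + w).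
Proof.
by apply/permP => x; rewrite permM !affine_permE GL_MxE mulmxDl mulmxA addrA.
Qed.

Lemma affine_perm_inj A B v w : affine_perm A v = affine_perm B w -> A = B /\ v = w.
Proof.
move/permP=> eqABx.
have vw : v = w by have := eqABx 0; rewrite !affine_permE !mul0mx !add0r.
split=> //; apply/val_inj/row_matrixP => i; rewrite !rowE.
by have := eqABx (delta_mx 0 i); rewrite !affine_permE vw => /addIr.
Qed.

Lemma affine_groupP (H : {group GL}) s :
  reflect (exists2 A, A \in H & exists v, s = affine_perm A v) (s \in affine_group H).
Proof.
rewrite /affine_group /=; set S := [set _ | _].
have memS t : reflect (exists2 A, A \in H & exists v, t = affine_perm A v) (t \in S).
  rewrite inE; apply: (iffP existsP) => [[v /exists_inP[A HA /forallP tE]] | [A HA [v ->]]].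
    by exists A => //; exists v; apply/permP => x; rewrite affine_permE; apply/eqP.
  by exists v; apply/exists_inP; exists A => //; apply/forallP => x; rewrite affine_permE.
have groupS : group_set S.
  apply/group_setP; split; first by apply/memS; exists 1%g => //; exists 0; rewrite affine_perm1.
  move=> _ _ /memS[A HA [v ->]] /memS[B HB [w ->]].
  by apply/memS; exists (A * B)%g; rewrite ?groupM //; eexists; rewrite affine_permM.
by rewrite gen_set_id //; apply: memS.
Qed.

Lemma affine_perm_in (H : {group GL}) A v : (affine_perm A v \in affine_group H) = (A \in H).
Proof.
apply/affine_groupP/idP => [[B HB [w /affine_perm_inj[-> _]]] // | HA].
by exists A => //; exists v.
Qed.

Lemma affine_groupS (H K : {group GL}) : H \subset K -> affine_group H \subset affine_group K.
Proof.
move=> sHK; apply/subsetP => _ /affine_groupP[A HA [v ->]].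
by rewrite affine_perm_in (subsetP sHK).
Qed.

End AffineGroup.

Section PrimeFieldMod4.
Local Open Scope ring_scope.
Variable p : nat.
Hypotheses (p_pr : prime p) (p_mod4 : (p %% 4 = 3)%N).
Local Notation V := 'rV['F_p]_2.
Local Notation GL := {'GL_2['F_p]}.

Lemma Fp_sqr_neqN1 (a : 'F_p) : a ^+ 2 != -1.
Proof.
apply/eqP => a2; have a4 : a ^+ 4 = 1 by rewrite (exprM a 2 2) a2 sqrrN expr1n.
have : a ^+ p = - a.
  rewrite [X in a ^+ X](divn_eq p 4) p_mod4 mulnC exprD exprM a4 expr1n mul1r.
  by rewrite exprS a2 mulrN1.
have := expf_card a; rewrite card_Fp // => -> /eqP.
rewrite -addr_eq0 -mulr2n -mulr_natr mulf_eq0.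
have two_neq0 : 2%:R != 0 :> 'F_p.
  by apply/eqP => /(congr1 (@nat_of_ord _)); rewrite val_Fp_nat // modn_small //; lia.
rewrite (negbTE two_neq0) orbF => /eqP a0.
by move/eqP: (a2); rewrite a0 expr0n eq_sym oppr_eq0 oner_eq0.
Qed.

Lemma card_rV2 : #|[set: V]| = (p ^ 2)%N.
Proof. by rewrite cardsT card_mx card_Fp. Qed.

Lemma card_rV2_mod4 : (#|V| = 1 %[mod 4])%N.
Proof. by rewrite -cardsT card_rV2 -modnXm p_mod4. Qed.

Lemma cycle_type_affine_sqrN1 (A : GL) v : GLval A ^+ 2 = -1 ->
  perm_eq (cycle_type (affine_perm A v)) (1 :: nseq (p ^ 2 %/ 4) 4)%N.
Proof.
move=> A2; set s := affine_perm A v; set c := v *m GLval A + v.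
have s2 x : (s ^+ 2)%g x = - x + c.
  by rewrite permX /= !affine_permE mulmxDl (mulmx_sqrN1 A2) addrA.
have twice_fix x : (s ^+ 2)%g x = x -> x + x = c by rewrite s2 => {2}<-; rewrite addNKr.
rewrite -card_rV2 cardsT; apply: cycle_type_1_4; last exact: card_rV2_mod4.
  by apply/permP => x; rewrite perm1 (expgD s 2 2) permM !s2 opprD opprK subrK.
move=> x y /twice_fix xx /twice_fix yy; apply/eqP; rewrite -subr_eq0; apply/eqP.
by apply: (addv_eq0 Fp_sqr_neqN1); rewrite addrACA -opprD xx yy subrr.
Qed.

Lemma stable_addr_closed_eqT (M : 'M['F_p]_2) (B : {set V}) w :
  M ^+ 2 = -1 -> 0 \in B -> {in B &, forall u v, u + v \in B} ->
  {in B, forall u, u *m M \in B} -> w \in B -> w != 0 -> B = [set: V].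
Proof.
move=> M2 B0 addB mulB Bw w0; apply/setP => x; rewrite inE.
have natB u n : u \in B -> u *+ n \in B.
  by move=> Bu; elim: n => [|n IHn]; rewrite ?mulr0n // mulrS addB.
have scaleB u (a : 'F_p) : u \in B -> a *: u \in B.
  by move=> Bu; rewrite -[a]natr_Zp scaler_nat natB.
have [a [b ->]] := rV2_span Fp_sqr_neqN1 M2 x w0.
by rewrite addB ?scaleB ?mulB.
Qed.

Lemma affine_group_primitive (H : {group GL}) g : g \in H -> GLval g ^+ 2 = -1 ->
  [primitive affine_group H, on [set: V] | 'P].
Proof.
move=> Hg g2; set G := affine_group H.
have Gtransl v : affine_perm 1 v \in G by rewrite affine_perm_in.
apply/andP; split.
  apply/imsetP; exists 0 => //; apply/setP => y; rewrite inE; apply/esym.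
  by have := mem_orbit 'P 0 (Gtransl y); rewrite /= apermE affine_permE mul0mx add0r.
apply/existsP => -[P /and3P[partP actsGP /andP[P_gt1 P_ltT]]].
have [/eqP covP trivP _] := and3P partP.
set B := pblock P 0.
have PB : B \in P by rewrite pblock_mem ?covP.
have pblock_affine A v x :
    A \in H -> pblock P (affine_perm A v x) = affine_perm A v @: pblock P x.
  move=> HA; rewrite -[affine_perm A v x]/('P%act x _).
  by rewrite (pblock_act partP actsGP) ?affine_perm_in.
have pblock_transl v : pblock P v = [set u + v | u in B].
  have transl0 : affine_perm 1 v 0 = v by rewrite affine_permE mul0mx add0r.
  rewrite -[v in LHS]transl0 pblock_affine // -/B.
  by apply: eq_imset => u; rewrite affine_permE GL_1E mulmx1.
have addB : {in B &, forall u w, u + w \in B}.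
  move=> u w Bu Bw; rewrite -(def_pblock trivP PB Bw) pblock_transl.
  by apply/imsetP; exists u.
have mulB : {in B, forall u, u *m GLval g \in B}.
  move=> u Bu; have := pblock_affine g 0 0 Hg.
  rewrite affine_permE mul0mx add0r -/B => ->.
  by rewrite -(addr0 (_ *m _)) -affine_permE imset_f.
have [w /andP[Bw w0] | B_0] := pickP [pred w | (w \in B) && (w != 0)].
  have BT : B = [set: V].
    by apply: stable_addr_closed_eqT g2 _ addB mulB Bw w0; rewrite mem_pblock covP.
  move: P_gt1; rewrite ltnNge => /negP[]; apply/card_le1_eqP.
  suff PB1 Y : Y \in P -> Y = B by move=> Y Z /PB1-> /PB1->.
  move=> PY; have /set0Pn[y Yy] : Y != set0 by apply: contraTneq PY => ->; case/and3P: partP.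
  by rewrite -(def_pblock trivP PY Yy) (def_pblock trivP PB) // BT inE.
have pblock1 v : pblock P v = [set v].
  rewrite pblock_transl; apply/setP => x; rewrite inE; apply/imsetP/eqP => [[u Bu ->] | ->].
    by have := B_0 u; rewrite /= Bu /= => /negbFE/eqP->; rewrite add0r.
  by exists 0; rewrite ?add0r // mem_pblock covP.
move: P_ltT; rewrite ltnNge => /negP[]; rewrite -(card_in_imset (f := pblock P)).
  by apply/subset_leq_card/subsetP => _ /imsetP[x _ ->]; rewrite pblock_mem ?covP.
by move=> x y _ _; rewrite !pblock1 => /set1_inj.
Qed.

End PrimeFieldMod4.

Lemma quaternion_expg4 (gT : finGroupType) (Q : {group gT}) :
  (Q \isog 'Q_8)%g -> {in Q, forall h, h ^+ 4 = 1}%g.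
Proof.
move=> Qiso h Qh; have [[x y] genQ _] := generators_quaternion (isT : 2 < 3)%N Qiso.
have [[_ ord4 _] _ _ _ _] := quaternion_structure (isT : 2 < 3)%N genQ Qiso.
case: genQ => _ _ ox _; apply/eqP; rewrite -order_dvdn.
have [hx | hx] := boolP (h \in <[x]>%g); last by rewrite ord4 // inE hx.
by apply: dvdn_trans (order_dvdG hx) _; rewrite -orderE ox.
Qed.

Section QuaternionAffinePair.
Local Open Scope ring_scope.
Variable p : nat.
Hypotheses (p_pr : prime p) (p_mod4 : (p %% 4 = 3)%N).
Local Notation GL := {'GL_2['F_p]}.
Variable Q : {group GL}.
Hypothesis QSL : forall h, h \in Q -> \det (GLval h) = 1.
Hypothesis Qiso : (Q \isog 'Q_8)%g.
Variable g : GL.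
Hypotheses (Qg : g \in Q) (g4 : #[g]%g = 4%N).

Let two_neq0 := natr2_neq0 (Fp_sqr_neqN1 p_pr p_mod4).

Lemma sqr_Q_eq1 h : h \in Q -> GLval h ^+ 2 = 1 \/ GLval h ^+ 2 = -1.
Proof.
move=> Qh; apply: (sl2_sqr_eq1 two_neq0); first by rewrite -GLvalX QSL ?groupX.
have h4 : (h ^+ (2 * 2) = 1)%g := quaternion_expg4 Qiso Qh.
by rewrite -exprM -GLvalX h4 GL_1E.
Qed.

Lemma sqr_g : GLval g ^+ 2 = -1.
Proof.
have [g2 | //] := sqr_Q_eq1 Qg.
suff : (g ^+ 2 = 1)%g by move/eqP; rewrite -order_dvdn g4.
by apply: val_inj; change (GLval (g ^+ 2) = GLval 1); rewrite GLvalX g2.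
Qed.

Lemma Q_cycle_or_sqrN1 h : h \in Q -> h \in <[g]>%g \/ GLval h ^+ 2 = -1.
Proof.
move=> Qh; have [h2 | ] := sqr_Q_eq1 Qh; [left | by right].
have [h1 | hN1] := sl2_sqr_eq1 two_neq0 (QSL Qh) h2.
  by rewrite (_ : h = 1%g) ?group1 //; apply: val_inj.
rewrite (_ : h = g ^+ 2)%g ?mem_cycle //; apply: val_inj.
by change (GLval h = GLval (g ^+ 2)); rewrite GLvalX sqr_g.
Qed.

Lemma affine_cycle_proper : affine_group <[g]>%g \proper affine_group Q.
Proof.
have /subsetPn[h Qh gh] : ~~ (Q \subset <[g]>%g).
  apply: contraTN isT => /subset_leq_card.
  by rewrite (card_isog Qiso) (card_quaternion (isT : 2 < 3)%N) -orderE g4.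
rewrite properE affine_groupS ?cycle_subG //=; apply/subsetPn.
by exists (affine_perm h 0); rewrite affine_perm_in.
Qed.

Lemma same_spectrum_affine : same_spectrum (affine_group Q) (affine_group <[g]>%g).
Proof.
have sGQ := proper_sub affine_cycle_proper.
split=> [s | t G2t]; last by exists t; rewrite ?(subsetP sGQ).
case/affine_groupP => A QA [v ->].
have [gA | A2] := Q_cycle_or_sqrN1 QA.
  by exists (affine_perm A v); rewrite ?affine_perm_in.
exists (affine_perm g 0); first by rewrite affine_perm_in cycle_id.
rewrite (perm_trans (cycle_type_affine_sqrN1 p_pr p_mod4 _ A2)) //.
by rewrite perm_sym cycle_type_affine_sqrN1 ?sqr_g.
Qed.

End QuaternionAffinePair.

Theorem mainTheorem13 (p : nat) (p_pr : prime p) (p_mod4 : p %% 4 = 3)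
    (Q : {group {'GL_2['F_p]}})
    (QSL : forall g, g \in Q -> (\det (GLval g))%R = 1%R)
    (Qiso : (Q \isog 'Q_8)%g)
    (g : {'GL_2['F_p]}) (gQ : g \in Q) (g4 : #[g]%g = 4) :
  let G1 := affine_group Q in
  let G2 := affine_group <[g]>%g in
  ~~ (G1 \isog G2)%g /\
  [primitive G1, on [set: 'rV['F_p]_2] | 'P] /\
  [primitive G2, on [set: 'rV['F_p]_2] | 'P] /\
  #|[set: 'rV['F_p]_2]| = p ^ 2 /\
  same_spectrum G1 G2.
Proof.
move=> G1 G2; have g2 := sqr_g p_pr p_mod4 QSL Qiso gQ g4.
split.
  apply/negP => /card_isog eqG12.
  by have := proper_card (affine_cycle_proper Qiso gQ g4); rewrite eqG12 ltnn.
split; first exact (affine_group_primitive p_pr p_mod4 gQ g2).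
split; first exact (affine_group_primitive p_pr p_mod4 (cycle_id g) g2).
split; first exact: card_rV2.
exact: same_spectrum_affine.
Qed.
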